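(* For every integer $T\ge 5$ and every $\sigma\in\mathfrak S_3$, the vector $\sigma c$ with $c=[T,\,T,\,-(T-2),\,1,\,-(T-2),\,1]$ defines a facet of $P^T$.
   Context: For an integer $T\ge 2$, let $\Omega_T$ be the set of words $w=s_1s_2\cdots s_T$ over $\{1,2,3\}$ with $s_l\neq s_{l+1}$ for $l=1,\dots,T-1$. For $w\in\Omega_T$ and an ordered pair $ij$, $i\neq j$, let $x_{ij}(w)$ be the number of indices $1\le l\le T-1$ with $s_ls_{l+1}=ij$. Vectors of $\mathbb R^6$ are indexed in the order $[x_{12},x_{13},x_{21},x_{23},x_{31},x_{32}]$. Let $a_w=[x_{12}(w),\dots,x_{32}(w)]$ and $P^T=\mathrm{conv}\{a_w:w\in\Omega_T\}$. $\mathfrak S_3$ acts on $\mathbb R^6$ by $(\sigma c)_{ij}=c_{\sigma(i)\sigma(j)}$. A vector $c$ defines a facet of $P^T$ if $c\cdot a_w\ge0$ for all $w\in\Omega_T$ and $\{x\in P^T: c\cdot x=0\}$ is a facet of $P^T$. *)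

From mathcomp Require Import all_boot all_order all_algebra.
From mathcomp Require Import fingroup perm.
Set Implicit Arguments. Unset Strict Implicit. Unset Printing Implicit Defensive.
Import Order.TTheory GRing.Theory Num.Theory.
Local Open Scope ring_scope.

(* Letters {1,2,3} are represented by 'I_3 = {0,1,2}.
   Coordinates of R^6 are indexed by 'I_6 in the order
   [x12, x13, x21, x23, x31, x32], i.e. k |-> pair_of k below. *)

Definition pair_of (k : 'I_6) : 'I_3 * 'I_3 :=
  match val k with
  | 0 => (inord 0, inord 1)
  | 1 => (inord 0, inord 2)
  | 2 => (inord 1, inord 0)
  | 3 => (inord 1, inord 2)
  | 4 => (inord 2, inord 0)
  | _ => (inord 2, inord 1)
  end.

(* index of the ordered pair ij (i != j) *)
Definition idx_of (i j : 'I_3) : 'I_6 :=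
  inord (2 * val i + (if val j < val i then val j else (val j).-1))%N.

Definition Omega (T : nat) (w : T.-tuple 'I_3) : bool :=
  [forall l : 'I_T, (l.+1 < T)%N ==> (tnth w l != nth ord0 w l.+1)].

(* x_ij(w) = #{ 1 <= l <= T-1 : s_l s_{l+1} = ij }  (0-based here) *)
Definition xcount (T : nat) (w : T.-tuple 'I_3) (i j : 'I_3) : nat :=
  #|[set l : 'I_T | (l.+1 < T)%N && (tnth w l == i) && (nth ord0 w l.+1 == j)]|.

Definition avec (R : nzRingType) (T : nat) (w : T.-tuple 'I_3) : 'rV[R]_6 :=
  \row_k (xcount w (pair_of k).1 (pair_of k).2)%:R.

Arguments avec : clear implicits.
Arguments avec R {T} w.

Definition dot (R : nzRingType) (c x : 'rV[R]_6) : R := \sum_k c 0 k * x 0 k.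

Definition PT (R : realFieldType) (T : nat) (x : 'rV[R]_6) : Prop :=
  exists lam : T.-tuple 'I_3 -> R,
    (forall w, 0 <= lam w) /\
    \sum_(w | Omega w) lam w = 1 /\
    x = \sum_(w | Omega w) lam w *: avec R w.

Arguments PT : clear implicits.

Definition act (R : Type) (s : {perm 'I_3}) (c : 'rV[R]_6) : 'rV[R]_6 :=
  \row_k c 0 (idx_of (s (pair_of k).1) (s (pair_of k).2)).

Definition aff_indep (R : fieldType) (k : nat) (p : 'I_k.+1 -> 'rV[R]_6) : Prop :=
  \rank (\matrix_(i < k) (p (lift ord0 i) - p ord0)) = k.

Definition affdim (R : fieldType) (S : 'rV[R]_6 -> Prop) (d : nat) : Prop :=
  (exists p : 'I_d.+1 -> 'rV[R]_6, (forall i, S (p i)) /\ aff_indep p) /\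
  (forall k (p : 'I_k.+1 -> 'rV[R]_6), (forall i, S (p i)) -> aff_indep p -> (k <= d)%N).

Definition is_facet (R : fieldType) (P F : 'rV[R]_6 -> Prop) : Prop :=
  exists d, affdim P d.+1 /\ affdim F d.

Definition defines_facet (R : realFieldType) (T : nat) (c : 'rV[R]_6) : Prop :=
  (forall w : T.-tuple 'I_3, Omega w -> 0 <= dot c (avec R w)) /\
  is_facet (PT R T) (fun x => PT R T x /\ dot c x = 0).

Arguments defines_facet : clear implicits.

Definition cvec (R : nzRingType) (T : nat) : 'rV[R]_6 :=
  \row_k (match val k with
          | 0 | 1 => (T%:R : R)
          | 2 | 4 => - (T%:R - 2)
          | _ => 1
          end).
Arguments cvec : clear implicits.

From mathcomp Require Import all_boot all_order all_algebra.
From mathcomp Require Import fingroup perm.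
From mathcomp Require Import ring zify.
Set Implicit Arguments. Unset Strict Implicit. Unset Printing Implicit Defensive.
Import Order.TTheory GRing.Theory Num.Theory.
Local Open Scope ring_scope.

(* The coordinates of a_w count the steps of the walk w, so c . a_w is the sum of
   c over the consecutive pairs of w.  Writing c = (T - 1) f + 1 with
   f_ij = [i = 1] - [j = 1], the sum telescopes: for a = sigma^-1(1),
   (sigma c) . a_w = (T - 1) ([s_1 = a] - [s_T = a] + 1), which is nonnegative and
   vanishes exactly on the words that end at a but do not start there.
   P^T lies in the hyperplane sum x = T - 1 and the face also in f_a . x = -1,
   which bounds their dimensions by 5 and 4.  Six words p_i ++ b :: t, with
   three-letter prefixes p_i and a common tail b :: t from b to a, are affinely
   independent points of P^T, five of them on the face; independence is certified
   by an explicit dual family of linear functionals. *)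

Section Walk.

Variables (A : Type) (V : nmodType).
Implicit Types (F : A -> A -> V) (s t : seq A) (x y : A).

Definition walk F s : V := \sum_(p <- zip s (behead s)) F p.1 p.2.

Lemma walk_nil F : walk F [::] = 0. Proof. exact: big_nil. Qed.

Lemma walk1 F x : walk F [:: x] = 0. Proof. exact: big_nil. Qed.

Lemma walk_cons2 F x y s : walk F [:: x, y & s] = F x y + walk F (y :: s).
Proof. exact: big_cons. Qed.

Lemma walk_cons F x s :
  walk F (x :: s) = (if s is y :: _ then F x y else 0) + walk F s.
Proof. by case: s => [|y s]; rewrite ?walk_cons2 // walk1 walk_nil addr0. Qed.

Lemma walk_nth F x0 s : walk F s =
  \sum_(0 <= l < size s) (if (l.+1 < size s)%N then F (nth x0 s l) (nth x0 s l.+1) else 0).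
Proof.
elim: s => [|x s IHs]; first by rewrite walk_nil big_nil.
rewrite walk_cons big_nat_recl // IHs /=; congr (_ + _).
by case: s {IHs}.
Qed.

Lemma walk_cat F s x t : walk F (s ++ x :: t) = walk F (rcons s x) + walk F (x :: t).
Proof.
elim: s => [|y s IHs]; first by rewrite walk1 add0r.
rewrite cat_cons rcons_cons walk_cons IHs (walk_cons _ y) addrA.
by case: s {IHs}.
Qed.

Lemma walk_cst v s : walk (fun _ _ => v) s = v *+ (size s).-1.
Proof.
elim: s => [|x s IHs]; first by rewrite walk_nil.
by rewrite walk_cons IHs; case: s {IHs} => [|y s] /=; rewrite ?add0r // mulrS.
Qed.

Lemma eq_walk_sorted (e : rel A) F G s :
  (forall y z, e y z -> F y z = G y z) -> sorted e s -> walk F s = walk G s.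
Proof.
move=> eFG; case: s => [|x s]; first by rewrite !walk_nil.
elim: s x => [|y s IHs] x /=; first by rewrite !walk1.
by case/andP=> exy /IHs; rewrite !walk_cons2 eFG // => ->.
Qed.

End Walk.

Lemma walk_telescope (A : Type) (V : zmodType) (f : A -> V) x s :
  walk (fun y z => f y - f z) (x :: s) = f x - f (last x s).
Proof.
elim: s x => [|y s IHs] x; first by rewrite walk1 subrr.
by rewrite walk_cons2 IHs addrA subrK.
Qed.

Lemma sorted_nthP (A : Type) (e : rel A) x0 (s : seq A) :
  reflect (forall l, (l.+1 < size s)%N -> e (nth x0 s l) (nth x0 s l.+1)) (sorted e s).
Proof. by case: s => [|x s]; [left | exact: pathP]. Qed.

Lemma OmegaE T (w : T.-tuple 'I_3) : Omega w = sorted (fun x y => x != y) w.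
Proof.
apply/forallP/(sorted_nthP _ ord0) => [Hw l | Hw l].
  rewrite size_tuple => lt_l; have lt_lT : (l < T)%N by rewrite ltnW.
  by move: (Hw (Ordinal lt_lT)); rewrite /= lt_l (tnth_nth ord0).
by apply/implyP => lt_l; rewrite (tnth_nth ord0) Hw ?size_tuple.
Qed.

Lemma xcount_walk T (w : T.-tuple 'I_3) i j :
  xcount w i j = walk (fun x y => ((x == i) && (y == j) : nat)) w.
Proof.
rewrite (walk_nth _ ord0) size_tuple /xcount cardsE -sum1_card big_mkcond big_mkord.
apply: eq_bigr => l _; rewrite unfold_in /= (tnth_nth ord0).
by case: (l.+1 < T)%N.
Qed.

Lemma idx_ofK (k : 'I_6) : idx_of (pair_of k).1 (pair_of k).2 = k.
Proof.
by apply: val_inj; case: k => [[|[|[|[|[|[|?]]]]]] ?] //=; rewrite /idx_of /= !inordK.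
Qed.

Lemma pair_of_idx (x y : 'I_3) : x != y -> pair_of (idx_of x y) = (x, y).
Proof.
case: x y => [[|[|[|?]]] ?] [[|[|[|?]]] ?] //= _; rewrite /idx_of /pair_of /= inordK //;
  by congr pair; apply: val_inj; rewrite /= inordK.
Qed.

Lemma pair_of_neq (k : 'I_6) : (pair_of k).1 != (pair_of k).2.
Proof.
by case: k => [[|[|[|[|[|[|?]]]]]] ?] //; rewrite /pair_of /= -val_eqE /= !inordK.
Qed.

Definition pairvec (R : nzRingType) (phi : 'I_3 -> 'I_3 -> R) : 'rV[R]_6 :=
  \row_k phi (pair_of k).1 (pair_of k).2.

Lemma pairvec_idx (R : nzRingType) (phi : 'I_3 -> 'I_3 -> R) x y :
  x != y -> pairvec phi 0 (idx_of x y) = phi x y.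
Proof. by move=> neq_xy; rewrite mxE pair_of_idx. Qed.

Lemma sum_pair_indicator (R : nzRingType) (phi : 'I_3 -> 'I_3 -> R) x y : x != y ->
  \sum_k phi (pair_of k).1 (pair_of k).2 * ((x == (pair_of k).1) && (y == (pair_of k).2))%:R
  = phi x y.
Proof.
move=> neq_xy; rewrite (bigD1 (idx_of x y)) //= pair_of_idx // !eqxx mulr1.
rewrite big1 ?addr0 // => k ne_k.
case: (x =P _) => [ex|_]; last by rewrite mulr0.
case: (y =P _) => [ey|_]; last by rewrite mulr0.
by move: ne_k; rewrite ex ey idx_ofK eqxx.
Qed.

Definition flowf (R : nzRingType) (a x y : 'I_3) : R := (x == a)%:R - (y == a)%:R.

Lemma walk_flowf (R : nzRingType) a x s :
  walk (flowf R a) (x :: s) = flowf R a x (last x s).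
Proof. exact: (walk_telescope (fun y => (y == a)%:R)). Qed.

Lemma flowf_perm (R : nzRingType) (s : {perm 'I_3}) a x y :
  flowf R a (s x) (s y) = flowf R ((s^-1)%g a) x y.
Proof.
have sK z : (s z == a) = (z == (s^-1)%g a) by rewrite -{1}(permKV s a) (inj_eq perm_inj).
by rewrite /flowf !sK.
Qed.

Definition flow (R : nzRingType) a : 'rV[R]_6 := pairvec (flowf R a).

Definition ones (R : nzRingType) : 'rV[R]_6 := pairvec (fun _ _ => 1).

Definition facet_normal (R : nzRingType) T a : 'rV[R]_6 :=
  pairvec (fun x y => (T%:R - 1) * flowf R a x y + 1).

Lemma facet_normalE (R : nzRingType) T a :
  facet_normal R T a = (T%:R - 1) *: flow R a + ones R.
Proof. by apply/rowP => k; rewrite !mxE. Qed.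

Lemma cvecE (R : comNzRingType) T : cvec R T = facet_normal R T ord0.
Proof.
apply/rowP => k; rewrite !mxE /flowf.
by case: k => [[|[|[|[|[|[|?]]]]]] ?] //=; rewrite -!val_eqE /= !inordK //=; ring.
Qed.

Lemma act_pairvec (R : nzRingType) (s : {perm 'I_3}) (phi : 'I_3 -> 'I_3 -> R) :
  act s (pairvec phi) = pairvec (fun x y => phi (s x) (s y)).
Proof.
by apply/rowP => k; rewrite mxE pairvec_idx ?mxE // (inj_eq perm_inj) pair_of_neq.
Qed.

Lemma act_cvec (R : comNzRingType) T (s : {perm 'I_3}) :
  act s (cvec R T) = facet_normal R T ((s^-1)%g ord0).
Proof. by rewrite cvecE act_pairvec; apply/rowP => k; rewrite !mxE flowf_perm. Qed.

Section Dot.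

Variable R : comNzRingType.
Implicit Types (u v p q : 'rV[R]_6) (r : R).

Lemma dotC u v : dot u v = dot v u.
Proof. by apply: eq_bigr => k _; rewrite mulrC. Qed.

Lemma dotDl u v p : dot (u + v) p = dot u p + dot v p.
Proof. by rewrite -big_split; apply: eq_bigr => k _; rewrite mxE mulrDl. Qed.

Lemma dotZl r u p : dot (r *: u) p = r * dot u p.
Proof. by rewrite mulr_sumr; apply: eq_bigr => k _; rewrite mxE mulrA. Qed.

Lemma dotBr u p q : dot u (p - q) = dot u p - dot u q.
Proof. by rewrite -sumrB; apply: eq_bigr => k _; rewrite !mxE mulrBr. Qed.

Lemma dotZr r u p : dot u (r *: p) = r * dot u p.
Proof. by rewrite dotC dotZl dotC. Qed.

Lemma dot_pairvec_avec T (w : T.-tuple 'I_3) (phi : 'I_3 -> 'I_3 -> R) :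
  Omega w -> dot (pairvec phi) (avec R w) = walk phi w.
Proof.
rewrite OmegaE => w_neq; rewrite /dot.
under eq_bigr => k _ do rewrite !mxE xcount_walk /walk natr_sum mulr_sumr.
pose F x y := \sum_k phi (pair_of k).1 (pair_of k).2 *
                 ((x == (pair_of k).1) && (y == (pair_of k).2))%:R.
transitivity (walk F w); first exact: exchange_big.
by apply: (eq_walk_sorted (e := fun x y => x != y)) => [x y|]; [exact: sum_pair_indicator|].
Qed.

End Dot.

Section AffineIndependence.

Variable R : fieldType.

Lemma rank_dual m (u v : 'I_m -> 'rV[R]_6) :
  (forall i j, dot (u i) (v j) = (i == j)%:R) -> \rank (\matrix_i u i) = m.
Proof.
move=> uv; apply/eqP/row_freeP; exists (\matrix_i v i)^T.
by apply/matrixP => i j; rewrite !mxE -uv; apply: eq_bigr => k _; rewrite !mxE.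
Qed.

Lemma aff_indep_dual k (p : 'I_k.+1 -> 'rV[R]_6) (q : 'I_k -> 'rV[R]_6) :
  (forall i j, dot (q j) (p (lift ord0 i) - p ord0) = (i == j)%:R) -> aff_indep p.
Proof. by move=> pq; apply: (rank_dual (v := q)) => i j; rewrite dotC pq. Qed.

Lemma aff_indep_codim k r (q z : 'I_r -> 'rV[R]_6) (p : 'I_k.+1 -> 'rV[R]_6) :
  (forall i j, dot (q i) (z j) = (i == j)%:R) ->
  (forall j i, dot (q j) (p i) = dot (q j) (p ord0)) ->
  aff_indep p -> (k + r <= 6)%N.
Proof.
move=> qz qp; rewrite /aff_indep; set A := \matrix_(i < k) _ => rkA.
have qA : \matrix_j q j *m A^T = 0.
  apply/matrixP => j i; rewrite !mxE.
  transitivity (dot (q j) (p (lift ord0 i) - p ord0)).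
    by apply: eq_bigr => l _; rewrite !mxE.
  by rewrite dotBr qp subrr.
have /mxrankS : (\matrix_j q j <= kermx A^T)%MS by apply/sub_kermxP.
rewrite mxrank_ker mxrank_tr rkA (rank_dual qz).
by have := rank_leq_col A; rewrite rkA; lia.
Qed.

End AffineIndependence.

Section Polytope.

Variables (R : realFieldType) (T : nat).

Lemma avec_PT (w : T.-tuple 'I_3) : Omega w -> PT R T (avec R w).
Proof.
move=> Ow; exists (fun v => (v == w)%:R); split; first by move=> v; rewrite ler0n.
rewrite (bigD1 w) //= eqxx big1 ?addr0; last by move=> v /andP[_ /negbTE ->].
split=> //; rewrite (bigD1 w) //= eqxx scale1r big1 ?addr0 //.
by move=> v /andP[_ /negbTE ->]; rewrite scale0r.
Qed.

Lemma dot_PT (u : 'rV[R]_6) r x :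
  (forall w : T.-tuple 'I_3, Omega w -> dot u (avec R w) = r) -> PT R T x -> dot u x = r.
Proof.
move=> uw [lam [_ [sum_lam ->]]]; rewrite /dot.
under eq_bigr => k _ do rewrite summxE mulr_sumr.
rewrite exchange_big /= -[RHS]mul1r -sum_lam mulr_suml.
apply: eq_bigr => w Ow; rewrite -(uw w Ow) /dot mulr_sumr.
by apply: eq_bigr => k _; rewrite mxE mulrCA.
Qed.

End Polytope.

Section FacetNormal.

Variables (R : realFieldType) (T : nat) (a : 'I_3).
Hypothesis T_gt0 : (0 < T)%N.

Lemma dot_ones_avec (w : T.-tuple 'I_3) : Omega w -> dot (ones R) (avec R w) = T%:R - 1.
Proof.
move=> Ow; rewrite dot_pairvec_avec // walk_cst size_tuple.
by case: T T_gt0 => // n _; rewrite -natr1 addrK.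
Qed.

Lemma dot_ones_PT x : PT R T x -> dot (ones R) x = T%:R - 1.
Proof. by apply: dot_PT => w; apply: dot_ones_avec. Qed.

Lemma dot_flow_avec (w : T.-tuple 'I_3) :
  Omega w -> dot (flow R a) (avec R w) = flowf R a (head ord0 w) (last ord0 w).
Proof.
move=> Ow; rewrite dot_pairvec_avec //.
have := size_tuple w; case: (tval w) => [|x s] sz_w; last by rewrite walk_flowf.
by move: T_gt0; rewrite -sz_w.
Qed.

Lemma dot_facet_normal x :
  PT R T x -> dot (facet_normal R T a) x = (T%:R - 1) * (dot (flow R a) x + 1).
Proof. by move=> Px; rewrite facet_normalE dotDl dotZl dot_ones_PT // mulrDr mulr1. Qed.

Lemma facet_normal_ge0 (w : T.-tuple 'I_3) :
  Omega w -> 0 <= dot (facet_normal R T a) (avec R w).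
Proof.
move=> Ow; rewrite dot_facet_normal; last exact: avec_PT.
rewrite dot_flow_avec // /flowf; apply: mulr_ge0; first by rewrite subr_ge0 ler1n.
by case: (_ == a); case: (_ == a); rewrite /= ?subrr ?subr0 ?add0r ?addNr ?addr_ge0.
Qed.

End FacetNormal.

Section Witnesses.

Variables (R : realFieldType) (a b d : 'I_3).
Hypotheses (ab : a != b) (bd : b != d) (da : d != a).
Let ba : b != a. Proof. by rewrite eq_sym. Qed.
Let db : d != b. Proof. by rewrite eq_sym. Qed.
Let ad : a != d. Proof. by rewrite eq_sym. Qed.

(* Prefixes 0 to 4 start away from a, so their witnesses lie on the facet;
   prefix 5 starts at a. *)
Definition witness_prefix (i : nat) : seq 'I_3 :=
  match i with
  | 0 => [:: b; a; d] | 1 => [:: b; d; a] | 2 => [:: d; a; d]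
  | 3 => [:: d; b; a] | 4 => [:: d; b; d] | _ => [:: a; b; d]
  end.

(* Obtained by solving the 5 x 6 linear system of [walk_prefix_dual]. *)
Definition prefix_dual (j : nat) (x y : 'I_3) : R :=
  match j with
  | 0 => - ((x == a)%:R + ((x == d) && (y == b))%:R)
  | 1 => - (x == b)%:R
  | 2 => - (y == d)%:R
  | 3 => - (x == a)%:R
  | _ => flowf R a x y
  end.

Lemma walk_prefix_dual i j : (i < 5)%N -> (j < 5)%N ->
  walk (prefix_dual j) (rcons (witness_prefix i.+1) b)
  - walk (prefix_dual j) (rcons (witness_prefix 0) b) = (i == j)%:R.
Proof.
case: i => [|[|[|[|[|i]]]]] // _; case: j => [|[|[|[|[|j]]]]] // _;
  rewrite /= !walk_cons2 walk1 /= /flowf ?eqxx ?(negbTE ab) ?(negbTE ba) ?(negbTE bd)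
    ?(negbTE db) ?(negbTE da) ?(negbTE ad) /=; ring.
Qed.

Variables (T : nat) (t : seq 'I_3).
Hypotheses (T_ge5 : (5 <= T)%N) (size_t : size t = (T - 4)%N).
Hypotheses (last_t : last b t = a) (path_t : path (fun x y => x != y) b t).

Let T_gt0 : (0 < T)%N. Proof. exact: leq_trans T_ge5. Qed.

Let T1_neq0 : T%:R - 1 != 0 :> R.
Proof. by rewrite subr_eq0 pnatr_eq1; apply/eqP => T1; move: T_ge5; rewrite T1. Qed.

Lemma witness_size i : size (witness_prefix i ++ b :: t) == T.
Proof.
have size_prefix : size (witness_prefix i) = 3 by case: i => [|[|[|[|[|i]]]]].
by rewrite size_cat size_prefix /= size_t; apply/eqP; lia.
Qed.

Definition witness i : T.-tuple 'I_3 := Tuple (witness_size i).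

Lemma Omega_witness i : Omega (witness i).
Proof.
by rewrite OmegaE; case: i => [|[|[|[|[|i]]]]]; rewrite /= ?ab ?ba ?bd ?db ?da ?ad path_t.
Qed.

Lemma dot_witness (phi : 'I_3 -> 'I_3 -> R) i :
  dot (pairvec phi) (avec R (witness i))
  = walk phi (rcons (witness_prefix i) b) + walk phi (b :: t).
Proof. by rewrite dot_pairvec_avec ?Omega_witness // walk_cat. Qed.

Lemma dot_flow_witness i :
  dot (flow R a) (avec R (witness i)) = flowf R a (head ord0 (witness_prefix i)) a.
Proof.
rewrite dot_flow_avec ?Omega_witness //.
by rewrite /= last_cat /= last_t; case: i => [|[|[|[|[|i]]]]].
Qed.

Lemma dot_prefix_dual_witness i j : (i < 5)%N -> (j < 5)%N ->
  dot (pairvec (prefix_dual j)) (avec R (witness i.+1) - avec R (witness 0)) = (i == j)%:R.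
Proof.
by move=> lt_i lt_j; rewrite dotBr !dot_witness opprD addrACA subrr addr0 walk_prefix_dual.
Qed.

Let z0 : 'rV[R]_6 := (T%:R - 1)^-1 *: avec R (witness 5).

Lemma dot_ones_z0 : dot (ones R) z0 = 1.
Proof. by rewrite dotZr dot_ones_avec ?Omega_witness // mulVf. Qed.

Lemma affdim_PT : affdim (PT R T) 5.
Proof.
split.
  exists (fun i : 'I_6 => avec R (witness i)); split=> [i|].
    exact/avec_PT/Omega_witness.
  apply: (aff_indep_dual (q := fun j : 'I_5 => pairvec (prefix_dual j))) => i j.
  by rewrite lift0 dot_prefix_dual_witness.
move=> k p Pp indep_p; rewrite -(leq_add2r 1).
apply: (aff_indep_codim (q := fun=> ones R) (z := fun=> z0) _ _ indep_p).
  by move=> i j; rewrite !ord1 dot_ones_z0.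
by move=> j i; rewrite !(dot_ones_PT T_gt0).
Qed.

Let face x := PT R T x /\ dot (facet_normal R T a) x = 0.

Lemma face_witness i : (i < 5)%N -> face (avec R (witness i)).
Proof.
move=> lt_i; split; first exact/avec_PT/Omega_witness.
rewrite dot_facet_normal //; last exact/avec_PT/Omega_witness.
rewrite dot_flow_witness /flowf eqxx.
case: i lt_i => [|[|[|[|[|i]]]]] //= _;
  by rewrite ?(negbTE ba) ?(negbTE da) sub0r addNr mulr0.
Qed.

Lemma dot_flow_face x : face x -> dot (flow R a) x = -1.
Proof.
case=> Px; rewrite dot_facet_normal // => /eqP; rewrite mulf_eq0 (negbTE T1_neq0) /=.
by rewrite addr_eq0 => /eqP.
Qed.

Lemma affdim_face : affdim face 4.
Proof.
split.
  exists (fun i : 'I_5 => avec R (witness i)); split=> [i|]; first exact: face_witness.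
  apply: (aff_indep_dual (q := fun j : 'I_4 => pairvec (prefix_dual j))) => i j.
  by rewrite lift0 dot_prefix_dual_witness // leqW.
move=> k p Fp indep_p; rewrite -(leq_add2r 2).
pose q (j : 'I_2) := if j == ord0 then ones R else flow R a.
(* witness 5 starts and ends at a, so the flow vanishes on it *)
pose z (j : 'I_2) := if j == ord0 then z0 else avec R (witness 5) - avec R (witness 0).
apply: (aff_indep_codim (q := q) (z := z) _ _ indep_p) => [i j | j i].
  case: i j => [[|[|?]] ?] [[|[|?]] ?] //=; rewrite /q /z /=.
  - exact: dot_ones_z0.
  - by rewrite dotBr !dot_ones_avec ?Omega_witness // subrr.
  - by rewrite dotZr dot_flow_witness /flowf subrr mulr0.
  - by rewrite dotBr !dot_flow_witness /flowf eqxx (negbTE ba) subrr /= sub0r sub0r opprK.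
have Pp l : PT R T (p l) by case: (Fp l).
by rewrite /q; case: ifP => _; rewrite ?(dot_ones_PT T_gt0) ?dot_flow_face.
Qed.

Lemma facet_normal_defines_facet : defines_facet R T (facet_normal R T a).
Proof.
split=> [w Ow|]; first exact: facet_normal_ge0.
by exists 4%N; split; [exact: affdim_PT | exact: affdim_face].
Qed.

End Witnesses.
Lemma exists_neq_path (A : eqType) (a b d : A) : a != b -> b != d -> d != a ->
  forall n, exists t, [/\ size t = n.+1, last b t = a & path (fun x y => x != y) b t].
Proof.
move=> ab bd da.
suff walks2 n : (exists t, [/\ size t = n.+1, last b t = a & path (fun x y => x != y) b t])
             /\ exists t, [/\ size t = n.+2, last b t = a & path (fun x y => x != y) b t].
  by move=> n; case: (walks2 n).
elim: n => [|n [[t [size_t last_t path_t]] walk2]].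
  by split; [exists [:: a] | exists [:: d; a]]; rewrite /= ?bd ?da // eq_sym ab.
split=> //; exists [:: a, b & t]; rewrite /= size_t last_t path_t eq_sym ab.
by split=> //; rewrite ab.
Qed.

Lemma exists_other_letters (a : 'I_3) : exists b d : 'I_3, [/\ a != b, b != d & d != a].
Proof.
case: a => -[|[|[|?]]] // lt_a.
- by exists (@Ordinal 3 1 isT), (@Ordinal 3 2 isT).
- by exists (@Ordinal 3 2 isT), (@Ordinal 3 0 isT).
- by exists (@Ordinal 3 0 isT), (@Ordinal 3 1 isT).
Qed.

Theorem proposition6 (R : realFieldType) (T : nat) (s : {perm 'I_3}) :
  (5 <= T)%N -> defines_facet R T (act s (cvec R T)).
Proof.
move=> T_ge5; rewrite act_cvec.
have [b [d [ab bd da]]] := exists_other_letters ((s^-1)%g ord0).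
have [t [size_t last_t path_t]] := exists_neq_path ab bd da (T - 5).
apply: (facet_normal_defines_facet R ab bd da T_ge5 _ last_t path_t).
by rewrite size_t; lia.
Qed.
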